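(* Let $D \in \mathbb{R}^{m \times n}$, let $Q \in \mathbb{Z}^{m\times n}$ be such that for each $j$ the $j$th column of $Q$ stores the sorting of the $j$th column of $D$, let $(a_1,\ldots,a_p)$ be a sequence of column indices of $D$, let $L$ be the ranking vector of the lexicographical sorting of the sub-matrix of $D$ determined by the sequence of columns $(a_1,\ldots,a_p)$, and let $i \in \{0,\ldots,n-1\}$. Then QuickLexSortRefine$(D,Q,i,L)$ returns the ranking vector $L'$ of the lexicographical sorting of the sub-matrix of $D$ determined by the sequence of columns $(a_1,\ldots,a_p,i)$.
   Context: Rows of $D$ are indexed by $\{0,\ldots,m-1\}$, columns by $\{0,\ldots,n-1\}$. ''The $j$th column of $Q$ stores the sorting of the $j$th column of $D$'' means $(Q_{0j},\ldots,Q_{m-1,j})$ is a permutation of $\{0,\ldots,m-1\}$ with $D_{Q_{0j},j} \le D_{Q_{1j},j} \le \cdots \le D_{Q_{m-1,j},j}$. For a sequence of columns $(b_1,\ldots,b_q)$, the sub-matrix determined by it has row $r$ equal to $(D_{r b_1},\ldots,D_{r b_q})$, and its rows are compared in lexicographic order: $v <_{\mathrm{lex}} w$ iff $v_1<w_1$, or $v_1=w_1,\ldots,v_k=w_k$ and $v_{k+1}<w_{k+1}$ for some $k$. The ranking vector of this ordering is the unique $L \in \{0,\ldots,m-1\}^m$ such that equal rows $r,s$ have $L_r = L_s$, rows with row $r$ lexicographically smaller than row $s$ have $L_r < L_s$, and $\sum_r L_r$ is minimal (equivalently, $L_r$ is the number of distinct rows of the sub-matrix that are lexicographically smaller than row $r$).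 For the empty sequence the ranking vector is the zero vector. QuickLexSortRefine$(D,Q,i,L)$ is the following procedure. Initialize integer arrays $\mathrm{IDval},\mathrm{IDvalInit},\mathrm{subID},\mathrm{newCount},\mathrm{numNewID}$ of length $m$ to zero. For $j=0,\ldots,m-1$: let $r := Q[j,i]$ and $\ell := L[r]$; if $\mathrm{IDvalInit}[\ell]=0$, set $\mathrm{IDvalInit}[\ell]:=1$ and $\mathrm{IDval}[\ell]:=D[r,i]$; otherwise, if $\mathrm{IDval}[\ell]\neq D[r,i]$, set $\mathrm{IDval}[\ell]:=D[r,i]$ and $\mathrm{newCount}[\ell]:=\mathrm{newCount}[\ell]+1$; in all cases then set $\mathrm{subID}[r]:=\mathrm{newCount}[\ell]$. Next set $\mathrm{numNewID}[m-1]:=\sum_{j=0}^{m-2}\mathrm{newCount}[j]$ and, for $j=m-2,m-3,\ldots,1$, $\mathrm{numNewID}[j]:=\mathrm{numNewID}[j+1]-\mathrm{newCount}[j]$ ($\mathrm{numNewID}[0]$ stays $0$). Finally, for $j=0,\ldots,m-1$ set $L'[j]:=L[j]+\mathrm{numNewID}[L[j]]+\mathrm{subID}[j]$, and return $L'$. *)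

From HB Require Import structures.
From mathcomp Require Import all_boot all_order all_algebra.
From mathcomp Require Import reals.
Set Implicit Arguments. Unset Strict Implicit. Unset Printing Implicit Defensive.
Import Order.TTheory GRing.Theory Num.Theory.
Local Open Scope ring_scope.

Section Defs.
Variable R : realType.
Variables m n : nat.

(* entry D[r, c] for an integer row index r (0 if r is out of range;
   never used out of range under the hypotheses of the theorem) *)
Definition Dat (D : 'M[R]_(m, n)) (r : int) (c : 'I_n) : R :=
  match insub (absz r) with Some r' => D r' c | None => 0 end.

Definition sorting_matrix (D : 'M[R]_(m, n)) (Q : 'M[int]_(m, n)) : Prop :=
  forall c : 'I_n,
    [/\ forall k : 'I_m, (0 <= Q k c) && (Q k c < m%:Z),
        forall k1 k2 : 'I_m, Q k1 c = Q k2 c -> k1 = k2 &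
        forall k1 k2 : 'I_m, (k1 <= k2)%N -> Dat D (Q k1 c) c <= Dat D (Q k2 c) c].

Definition subrow (D : 'M[R]_(m, n)) (s : seq 'I_n) (r : 'I_m) : seq R :=
  [seq D r b | b <- s].

Fixpoint lexlt (v w : seq R) : bool :=
  match v, w with
  | x :: v', y :: w' => (x < y) || ((x == y) && lexlt v' w')
  | _, _ => false
  end.

Definition rank_admissible (D : 'M[R]_(m, n)) (s : seq 'I_n) (L : 'I_m -> int) : Prop :=
  [/\ forall r, (0 <= L r) && (L r < m%:Z),
      forall r s', subrow D s r = subrow D s s' -> L r = L s' &
      forall r s', lexlt (subrow D s r) (subrow D s s') -> L r < L s'].

Definition is_ranking_vector (D : 'M[R]_(m, n)) (s : seq 'I_n) (L : 'I_m -> int) : Prop :=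
  rank_admissible D s L /\
  forall L' : 'I_m -> int, rank_admissible D s L' ->
    \sum_(r < m) L r <= \sum_(r < m) L' r.

Definition upd {T : Type} (f : nat -> T) (k : nat) (v : T) : nat -> T :=
  fun x => if x == k then v else f x.

Definition Lat (L : 'I_m -> int) (r : nat) : int :=
  match insub r with Some r' => L r' | None => 0 end.

Record qstate := QState {
  IDval : nat -> R; IDvalInit : nat -> int; subID : nat -> int; newCount : nat -> int }.

Definition qstep (D : 'M[R]_(m, n)) (Q : 'M[int]_(m, n)) (i : 'I_n) (L : 'I_m -> int)
    (st : qstate) (j : 'I_m) : qstate :=
  let r := Q j i in
  let l := absz (Lat L (absz r)) in
  let d := Dat D r i in
  let st1 :=
    if IDvalInit st l == 0 then
      QState (upd (IDval st) l d) (upd (IDvalInit st) l 1) (subID st) (newCount st)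
    else if IDval st l != d then
      QState (upd (IDval st) l d) (IDvalInit st) (subID st)
             (upd (newCount st) l (newCount st l + 1))
    else st in
  QState (IDval st1) (IDvalInit st1) (upd (subID st1) (absz r) (newCount st1 l))
         (newCount st1).

Definition QuickLexSortRefine (D : 'M[R]_(m, n)) (Q : 'M[int]_(m, n)) (i : 'I_n)
    (L : 'I_m -> int) : 'I_m -> int :=
  let st := foldl (qstep D Q i L) (QState (fun _ => 0) (fun _ => 0) (fun _ => 0) (fun _ => 0))
                  (enum 'I_m) in
  let nc := newCount st in
  (* numNewID[m-1] := sum_{j=0}^{m-2} newCount[j] *)
  let nn0 : nat -> int := upd (fun _ => 0) m.-1 (\sum_(0 <= j < m.-1) nc j) in
  (* for j = m-2, m-3, ..., 1 : numNewID[j] := numNewID[j+1] - newCount[j] *)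
  let nn := foldl (fun f j => upd f j (f j.+1 - nc j)) nn0
                  [seq (m.-2 - k)%N | k <- iota 0 m.-2] in
  fun j => L j + nn (absz (L j)) + subID st j.
End Defs.

From HB Require Import structures.
From mathcomp Require Import all_boot all_order all_algebra.
From mathcomp Require Import reals zify.
Import Order.TTheory GRing.Theory Num.Theory.
Local Open Scope ring_scope.
Set Implicit Arguments. Unset Strict Implicit.

(* Rows with equal values of L form the classes of the ordering by a.  The
   scan visits the rows in increasing order of column i, so inside each class
   the values of column i are met in increasing order: subID r ends up as the
   number of distinct values of its class below D r i, and newCount l as the
   number of distinct values of class l minus one.  Hence
   L' r = L r + \sum_(k < L r) newCount k + subID r orders each class by
   column i and shifts every class up by the new values created below it.  So
   L' is constant on equal rows and strictly monotone for the order by (a, i),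
   and it has no gaps; a gap-free admissible labelling is pointwise below every
   admissible one, hence it is the ranking vector. *)

Lemma iota0Sr (t : nat) : iota 0 t.+1 = rcons (iota 0 t) t.
Proof. by rewrite -addn1 iotaD add0n cats1. Qed.

Section Lexicographic.
Variable R : realType.
Implicit Types v w : seq R.

Lemma lexlt_total v w : size v = size w -> [\/ v = w, lexlt v w | lexlt w v].
Proof.
elim: v w => [|x v IH] [|y w] //= => [_|[]]; first exact: Or31.
move=> /IH[->|lt_vw|lt_wv]; case: (ltgtP x y) => [lt_xy|lt_yx|->];
  by [apply: Or31 | apply: Or32 | apply: Or33].
Qed.

Lemma lexlt_rcons v w x y : size v = size w ->
  lexlt (rcons v x) (rcons w y) = lexlt v w || (v == w) && (x < y).
Proof.
elim: v w => [|a v IH] [|b w] //= => [_|[] /IH ->]; first by rewrite andbF orbF.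
by rewrite eqseq_cons; case: (ltgtP a b).
Qed.

End Lexicographic.

Section RankingVectors.
Variables (R : realType) (m n : nat) (D : 'M[R]_(m, n)).
Implicit Types (s : seq 'I_n) (L : 'I_m -> int).

Lemma size_subrow s r : size (subrow D s r) = size s.
Proof. exact: size_map. Qed.

Lemma subrow_rcons s i r : subrow D (rcons s i) r = rcons (subrow D s r) (D r i).
Proof. exact: map_rcons. Qed.

Definition dense L := forall r, 0 < L r -> exists r', L r' = L r - 1.

Lemma dense_attained L : dense L ->
  forall r (v : nat), v%:Z <= L r -> exists r', L r' = v%:Z.
Proof.
move=> dL r v le_vL.
have [d Ld] : exists d, L r = (v + d)%N%:Z by exists (absz (L r) - v)%N; lia.
elim: d r Ld {le_vL} => [|d IH] r Ld; first by exists r; rewrite Ld addn0.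
have [|r' Lr'] := dL r; first by rewrite Ld; lia.
by apply: (IH r'); rewrite Lr' Ld; lia.
Qed.

Lemma dense_lt_card L : (forall r, 0 <= L r) -> dense L -> forall r, L r < m%:Z.
Proof.
move=> L_ge0 dL r; pose K := absz (L r).
have LK : L r = K%:Z by rewrite gez0_abs.
have sub : {subset [seq v%:Z | v <- iota 0 K.+1] <= [seq L x | x <- enum 'I_m]}.
  move=> z /mapP[v]; rewrite mem_iota ltnS => /andP[_ le_vK] ->{z}.
  have [|r' <-] := @dense_attained L dL r v; first by rewrite LK lez_nat.
  exact: map_f (mem_enum _ r').
have Posz_inj : injective Posz by move=> ? ? [].
have := uniq_leq_size (etrans (map_inj_uniq Posz_inj _) (iota_uniq 0 K.+1)) sub.
by rewrite !size_map size_iota -enumT size_enum_ord LK ltz_nat.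
Qed.

Lemma admissible_dense_le s L L' :
  rank_admissible D s L -> dense L -> rank_admissible D s L' -> forall r, L r <= L' r.
Proof.
move=> [L_range L_eq L_lt] dL [L'_range _ L'_lt].
suff le_k : forall k : nat, forall r, L r = k%:Z -> k%:Z <= L' r.
  move=> r; have /andP[L_ge0 _] := L_range r.
  by have := le_k _ r (esym (gez0_abs L_ge0)); rewrite gez0_abs.
elim=> [|k IH] r Lr; first by case/andP: (L'_range r).
have [|r' Lr'] := dL r; first by rewrite Lr.
have {}/IH IH : L r' = k%:Z by rewrite Lr' Lr; lia.
case: (lexlt_total (etrans (size_subrow s r') (esym (size_subrow s r)))).
- by move/L_eq; rewrite Lr' Lr; lia.
- by move/L'_lt; lia.
- by move/L_lt; rewrite Lr' Lr; lia.
Qed.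

Lemma ranking_vector_dense s L : is_ranking_vector D s L -> dense L.
Proof.
move=> [[L_range L_eq L_lt] L_min] r Lr_gt0.
case: (boolP [exists r', L r' == L r - 1]) => [/existsP[r' /eqP] | gap]; first by exists r'.
have {}gap x : L x != L r - 1 by apply: contraNneq gap => ?; apply/existsP; exists x; apply/eqP.
(* Closing the gap below L r keeps L admissible and lowers its sum. *)
pose L' x := if L r <= L x then L x - 1 else L x.
have adm' : rank_admissible D s L'.
  split=> [x | x y /L_eq | x y /L_lt lt_xy]; rewrite /L'.
  - by have := L_range x; case: ifP; lia.
  - by move=> ->.
  - by have := gap x; have := L_range x; have := L_range y; do 2 case: ifP; move=> ? ? /eqP; lia.
have := L_min _ adm'; rewrite (bigD1 r) // [X in _ <= X](bigD1 r) //= leNgt.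
suff -> : L' r + \sum_(x < m | x != r) L' x < L r + \sum_(x < m | x != r) L x by [].
apply: ltr_leD; first by rewrite /L' lexx ltrBlDr ltrDl.
by apply: ler_sum => x _; rewrite /L'; case: ifP; lia.
Qed.

Lemma dense_ranking_vector s L : (forall r, 0 <= L r) -> dense L ->
  (forall r r', subrow D s r = subrow D s r' -> L r = L r') ->
  (forall r r', lexlt (subrow D s r) (subrow D s r') -> L r < L r') ->
  is_ranking_vector D s L.
Proof.
move=> L_ge0 dL L_eq L_lt.
have adm : rank_admissible D s L.
  by split=> // r; rewrite L_ge0 dense_lt_card.
split=> // L' adm'; apply: ler_sum => r _; exact: (admissible_dense_le adm dL adm' r).
Qed.

End RankingVectors.

Lemma numNewID_prefix_sum (M : nat) (nc : nat -> int) (l : nat) : (l < M)%N ->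
  foldl (fun f j => upd f j (f j.+1 - nc j))
        (upd (fun _ => 0) M.-1 (\sum_(0 <= j < M.-1) nc j))
        [seq (M.-2 - k)%N | k <- iota 0 M.-2] l = \sum_(0 <= k < l) nc k.
Proof.
move=> lt_lM; set f0 := upd _ _ _.
suff after_t t : (t <= M.-2)%N -> forall x, (x <= M.-1)%N -> (M.-1 - t <= x)%N || (x == 0%N) ->
    foldl (fun f j => upd f j (f j.+1 - nc j)) f0 [seq (M.-2 - k)%N | k <- iota 0 t] x
    = \sum_(0 <= k < x) nc k.
  by apply: after_t; case: l lt_lM => [|l] /=; lia.
elim: t => [|t IH] le_tM x le_xM x_done.
  rewrite /= /f0 /upd; case: eqP => [-> //|ne].
  by rewrite big_geq //; lia.
rewrite iota0Sr map_rcons foldl_rcons {1}/upd; case: eqP => [->|ne].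
  by rewrite IH ?(big_nat_recr (M.-2 - t)%N 0) ?addrK //; lia.
by apply: IH; lia.
Qed.

Lemma upd_id (T : Type) (f : nat -> T) k v x : f k = v -> upd f k v x = f x.
Proof. by rewrite /upd => <-; case: eqP => [->|]. Qed.

Section Scan.
Variables (R : realType) (m n : nat) (D : 'M[R]_(m, n)) (Q : 'M[int]_(m, n)).
Variables (i : 'I_n) (L : 'I_m -> int).
Hypothesis sortQ : sorting_matrix D Q.

(* The row stored at position t of the sorted column i (0 past the end). *)
Definition qrow (t : nat) : int :=
  if (insub t : option 'I_m) is Some t' then Q t' i else 0.
Definition qclass (t : nat) : nat := absz (Lat L (absz (qrow t))).
Definition qvalue (t : nat) : R := Dat D (qrow t) i.

Definition seen (l t : nat) : bool := has (fun k => qclass k == l) (iota 0 t).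

Definition new_id (t : nat) : bool :=
  seen (qclass t) t &&
  all (fun k => (qclass k == qclass t) ==> (qvalue k < qvalue t)) (iota 0 t).

Definition new_ids (l u : nat) : nat :=
  count (fun k => (qclass k == l) && new_id k) (iota 0 u).

Definition scan_inv (t : nat) (st : qstate R) : Prop :=
  [/\ forall l, IDvalInit st l = (if seen l t then 1 else 0),
      forall l, seen l t ->
        (exists2 k, (k < t)%N & qclass k = l /\ IDval st l = qvalue k) /\
        (forall k, (k < t)%N -> qclass k = l -> qvalue k <= IDval st l),
      forall l, newCount st l = (new_ids l t)%:Z &
      forall k, (k < t)%N -> subID st (absz (qrow k)) = (new_ids (qclass k) k.+1)%:Z].

Lemma qrow_ord (j : 'I_m) : qrow j = Q j i.
Proof. by rewrite /qrow valK. Qed.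

Lemma qrow_ge0 (t : nat) : 0 <= qrow t.
Proof.
rewrite /qrow; case: insubP => [t' _ _|_] //.
by have [Q_range _ _] := sortQ i; case/andP: (Q_range t').
Qed.

Lemma qrow_inj k (t : 'I_m) : (k < t)%N -> absz (qrow k) != absz (qrow t).
Proof.
move=> lt_kt; have lt_km : (k < m)%N by apply: ltn_trans lt_kt _.
have [_ Q_inj _] := sortQ i.
apply: contraTneq lt_kt => eq_abs.
have eq_q : qrow k = qrow t by rewrite -[qrow k]gez0_abs ?qrow_ge0 // eq_abs gez0_abs ?qrow_ge0.
have := Q_inj (Ordinal lt_km) t; rewrite -!qrow_ord => /(_ eq_q) <-.
by rewrite ltnn.
Qed.

Lemma qvalue_sorted k t : (k <= t)%N -> (t < m)%N -> qvalue k <= qvalue t.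
Proof.
move=> le_kt lt_tm; have lt_km : (k < m)%N by apply: leq_ltn_trans lt_tm.
have [_ _ Q_sorted] := sortQ i.
have := Q_sorted (Ordinal lt_km) (Ordinal lt_tm) le_kt.
by rewrite /qvalue -!qrow_ord.
Qed.

Lemma seen_S l t : seen l t.+1 = seen l t || (qclass t == l).
Proof. by rewrite /seen iota0Sr has_rcons orbC. Qed.

Lemma new_ids_S l t : new_ids l t.+1 = (new_ids l t + ((qclass t == l) && new_id t))%N.
Proof. by rewrite /new_ids iota0Sr -cats1 count_cat /= addn0. Qed.

Lemma new_idE (j : 'I_m) st : scan_inv j st ->
  new_id j = (IDvalInit st (qclass j) != 0) && (IDval st (qclass j) != qvalue j).
Proof.
move=> [init_seen val_max _ _]; rewrite init_seen /new_id.
case: (boolP (seen (qclass j) j)) => seen_j; rewrite ?andbF // oner_neq0 !andTb.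
have [[k0 lt_k0j [cl_k0 val_k0]] le_max] := val_max _ seen_j.
rewrite val_k0.
apply/allP/idP => [all_lt | ne_k0j k].
  by have := all_lt k0; rewrite mem_iota lt_k0j cl_k0 eqxx => /(_ isT) /lt_eqF ->.
rewrite mem_iota => /andP[_ lt_kj]; apply/implyP => /eqP cl_k.
apply: le_lt_trans (le_max k lt_kj cl_k) _.
rewrite val_k0 lt_neqAle (qvalue_sorted (ltnW lt_k0j)) ?ltn_ord //.
by apply/andP; split; [exact: ne_k0j |].
Qed.

Lemma qstepE (j : 'I_m) st : scan_inv j st ->
  let st' := qstep D Q i L st j in
  [/\ forall l, IDvalInit st' l = upd (IDvalInit st) (qclass j) 1 l,
      forall l, IDval st' l = upd (IDval st) (qclass j) (qvalue j) l,
      forall l, newCount st' l =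
        upd (newCount st) (qclass j) (newCount st (qclass j) + (new_id j)%:Z) l &
      forall x, subID st' x = upd (subID st) (absz (qrow j)) (newCount st' (qclass j)) x].
Proof.
move=> inv; have [init_seen _ _ _] := inv.
rewrite /qstep -qrow_ord -/(qclass j) -/(qvalue j).
case: ifP => [/eqP init0 | /negbT init_ne].
  rewrite (new_idE inv) init0 eqxx andFb addr0.
  by split=> x; cbn [IDval IDvalInit subID newCount]; [| | rewrite upd_id |].
have init1 : IDvalInit st (qclass j) = 1.
  by move: init_ne; rewrite init_seen; case: ifP.
rewrite (new_idE inv) init_ne andTb; case: ifP => [_ | /negbFE/eqP same].
  by split=> x; cbn [IDval IDvalInit subID newCount]; [rewrite upd_id | | |].
by split=> x; cbn [IDval IDvalInit subID newCount]; [rewrite upd_id.. |]; rewrite ?addr0.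
Qed.

Lemma scan_inv_step (j : 'I_m) st : scan_inv j st -> scan_inv j.+1 (qstep D Q i L st j).
Proof.
move=> inv; have [init' val' count' sub'] := qstepE inv.
have [init_seen val_max count_new sub_new] := inv.
split.
- move=> l; rewrite init' /upd seen_S eq_sym; case: eqP => [_|_]; first by rewrite orbT.
  by rewrite orbF init_seen.
- move=> l; rewrite val' /upd; case: eqP => [->|/eqP ne_lj] seen_l.
    split; first by exists j.
    by move=> k; rewrite ltnS => le_kj _; apply: qvalue_sorted.
  have {}seen_l : seen l j by move: seen_l; rewrite seen_S eq_sym (negbTE ne_lj) orbF.
  have [[k lt_kj cl_k] le_max] := val_max l seen_l.
  split; first by exists k => //; apply: ltnW.
  move=> k'; rewrite ltnS leq_eqVlt => /orP[/eqP-> cl_j | lt_k'j]; last exact: le_max.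
  by rewrite cl_j eqxx in ne_lj.
- move=> l; rewrite count' /upd new_ids_S; case: eqP => [->|/eqP ne_lj].
    by rewrite eqxx count_new PoszD.
  by rewrite count_new eq_sym (negbTE ne_lj) addn0.
- move=> k; rewrite ltnS leq_eqVlt sub' /upd => /orP[/eqP->|lt_kj].
    by rewrite eqxx count' /upd eqxx count_new new_ids_S eqxx PoszD.
  by rewrite (negbTE (qrow_inj lt_kj)) sub_new.
Qed.

Lemma scan_inv_foldl (s : seq 'I_m) t st : map val s = iota t (size s) -> scan_inv t st ->
  scan_inv (t + size s) (foldl (qstep D Q i L) st s).
Proof.
elim: s t st => [|j s IH] t st /=; first by rewrite addn0.
by case=> <- s_iota inv; rewrite -addSnnS; apply: IH s_iota (scan_inv_step inv).
Qed.

Definition scan_state : qstate R :=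
  foldl (qstep D Q i L) (QState (fun _ => 0) (fun _ => 0) (fun _ => 0) (fun _ => 0)) (enum 'I_m).

Lemma scan_inv_state : scan_inv m scan_state.
Proof.
by have := @scan_inv_foldl (enum 'I_m) 0; rewrite val_enum_ord size_enum_ord; apply.
Qed.

Lemma new_ids_cat l u d :
  new_ids l (u + d) = (new_ids l u + count (fun k => (qclass k == l) && new_id k) (iota u d))%N.
Proof. by rewrite /new_ids iotaD count_cat. Qed.

Lemma new_ids_mono l u u' : (u <= u')%N -> (new_ids l u <= new_ids l u')%N.
Proof. by move=> le_uu'; rewrite -(subnKC le_uu') new_ids_cat leq_addr. Qed.

Lemma new_ids_last l u : seen l u ->
  exists k, [/\ (k < u)%N, qclass k = l & new_ids l k.+1 = new_ids l u].
Proof.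
elim: u => [|u IH] //; rewrite seen_S.
case: (eqVneq (qclass u) l) => [cl_u _ | ne_ul]; first by exists u.
rewrite orbF => /IH[k [lt_ku cl_k e]]; exists k; split=> //; first exact: ltnW.
by rewrite e new_ids_S (negbTE ne_ul) addn0.
Qed.

Lemma new_ids_pred l u : (0 < new_ids l u)%N ->
  exists k, [/\ (k < u)%N, qclass k = l & new_ids l k.+1 = (new_ids l u).-1].
Proof.
elim: u => [|u IH] //; rewrite new_ids_S.
case: (boolP ((qclass u == l) && new_id u)) => [/andP[/eqP cl_u new_u] _ | _]; last first.
  by rewrite addn0 => /IH[k [lt_ku cl_k e]]; exists k; split=> //; apply: ltnW.
have [|k [lt_ku cl_k e]] := @new_ids_last l u; first by move: new_u; rewrite /new_id cl_u => /andP[].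
by exists k; split=> //; [apply: ltnW | rewrite e addn1].
Qed.

Lemma new_ids_eq k k' : (k <= k')%N -> (k' < m)%N ->
  qclass k = qclass k' -> qvalue k = qvalue k' ->
  new_ids (qclass k) k'.+1 = new_ids (qclass k) k.+1.
Proof.
move=> le_kk' lt_k'm cl_kk' val_kk'.
rewrite -(subnKC (leq_ltn_trans le_kk' (ltnSn k'))) new_ids_cat.
apply/eqP; rewrite -[X in _ == X]addn0 eqn_add2l -leqn0 leqNgt -has_count.
apply/hasPn => t; rewrite mem_iota subnKC ?ltnS // => /andP[lt_kt le_tk'].
apply/negP => /andP[/eqP cl_t /andP[_ /allP/(_ k)]].
rewrite mem_iota lt_kt cl_t eqxx implyTb => /(_ isT).
have le_tk : qvalue t <= qvalue k by rewrite val_kk' qvalue_sorted.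
by rewrite ltNge le_tk.
Qed.

Lemma new_id_first t k : (k < t)%N -> (t < m)%N ->
  qclass k = qclass t -> qvalue k < qvalue t ->
  (forall t', (t' < t)%N -> qclass t' = qclass t -> qvalue t' != qvalue t) ->
  new_id t.
Proof.
move=> lt_kt lt_tm cl_kt val_kt first_t; apply/andP; split.
  by apply/hasP; exists k; rewrite ?mem_iota ?cl_kt.
apply/allP => t'; rewrite mem_iota => /andP[_ lt_t't]; apply/implyP => /eqP cl_t'.
by rewrite lt_neqAle (first_t _ lt_t't cl_t') (qvalue_sorted (ltnW lt_t't) lt_tm).
Qed.

Lemma new_ids_lt k k' : (k < m)%N -> (k' < m)%N ->
  qclass k = qclass k' -> qvalue k < qvalue k' ->
  (new_ids (qclass k) k.+1 < new_ids (qclass k) k'.+1)%N.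
Proof.
move=> lt_km lt_k'm cl_kk' val_kk'.
(* The first position of the class of k with value qvalue k' creates a new ID. *)
pose P t := (qclass t == qclass k) && (qvalue t == qvalue k').
have [|t0 /andP[/eqP cl_t0 /eqP val_t0] min_t0] := ex_minnP (ex_intro P k' _).
  by rewrite /P cl_kk' !eqxx.
have le_t0k' : (t0 <= k')%N by apply: min_t0; rewrite /P cl_kk' !eqxx.
have lt_kt0 : (k < t0)%N.
  by rewrite ltnNge; apply: contraTN val_kk' => /qvalue_sorted/(_ lt_km); rewrite val_t0 leNgt.
have new_t0 : new_id t0.
  apply: (new_id_first lt_kt0 (leq_ltn_trans le_t0k' lt_k'm)); rewrite ?cl_t0 ?val_t0 //.
  move=> t' lt_t't cl_t'; apply: contraTneq lt_t't => val_t'.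
  by rewrite -leqNgt; apply: min_t0; rewrite /P cl_t' val_t' !eqxx.
apply: (@leq_ltn_trans (new_ids (qclass k) t0)); first exact: new_ids_mono.
apply: (@leq_trans (new_ids (qclass k) t0.+1)); last exact: new_ids_mono.
by rewrite new_ids_S cl_t0 eqxx new_t0 addn1.
Qed.

Lemma absz_Q_lt (k : 'I_m) : (absz (Q k i) < m)%N.
Proof.
have [Q_range _ _] := sortQ i; case/andP: (Q_range k) => Q_ge0.
by rewrite -(gez0_abs Q_ge0) ltz_nat.
Qed.

Definition sorted_row (k : 'I_m) : 'I_m := insubd k (absz (Q k i)).

Lemma sorted_row_inj : injective sorted_row.
Proof.
move=> k1 k2 /(congr1 val); rewrite !val_insubd !absz_Q_lt.
have [Q_range Q_inj _] := sortQ i; apply: contra_eq => ne_k.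
apply/eqP => /(congr1 Posz); rewrite !gez0_abs; last 2 first.
- by case/andP: (Q_range k2).
- by case/andP: (Q_range k1).
by move/Q_inj; apply/eqP.
Qed.

Definition sorted_pos (r : 'I_m) : 'I_m := invF sorted_row_inj r.

Lemma sorted_pos_row k : sorted_pos (sorted_row k) = k.
Proof. exact: invF_f. Qed.

Lemma qrow_sorted_pos r : absz (qrow (sorted_pos r)) = r.
Proof.
have := congr1 val (f_invF sorted_row_inj r).
by rewrite /sorted_row val_insubd absz_Q_lt qrow_ord.
Qed.

Lemma qclass_sorted_pos r : qclass (sorted_pos r) = absz (L r).
Proof. by rewrite /qclass qrow_sorted_pos /Lat valK. Qed.

Lemma qvalue_sorted_pos r : qvalue (sorted_pos r) = D r i.
Proof. by rewrite /qvalue -(gez0_abs (qrow_ge0 _)) qrow_sorted_pos /Dat absz_nat valK. Qed.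

Hypothesis L_range : forall r, 0 <= L r < m%:Z.

Lemma L_ge0 r : 0 <= L r.
Proof. by case/andP: (L_range r). Qed.

Lemma absz_L_lt r : (absz (L r) < m)%N.
Proof. by case/andP: (L_range r) => L_ge0; rewrite -(gez0_abs L_ge0) ltz_nat. Qed.

Lemma absz_L_inj r r' : absz (L r) = absz (L r') -> L r = L r'.
Proof. by move=> e; rewrite -[L r](gez0_abs (L_ge0 r)) -[L r'](gez0_abs (L_ge0 r')) e. Qed.

Lemma sorted_pos_class r k : (k < m)%N -> qclass k = absz (L r) ->
  exists2 r', sorted_pos r' = k :> nat & L r' = L r.
Proof.
move=> lt_km cl_k; exists (sorted_row (Ordinal lt_km)); first by rewrite sorted_pos_row.
by apply: absz_L_inj; rewrite -qclass_sorted_pos sorted_pos_row.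
Qed.

Definition sub_rank (r : 'I_m) : nat := new_ids (absz (L r)) (sorted_pos r).+1.

Definition class_offset (l : nat) : int := \sum_(0 <= k < l) (new_ids k m)%:Z.

Lemma QuickLexSortRefineE r :
  QuickLexSortRefine D Q i L r = L r + class_offset (absz (L r)) + (sub_rank r)%:Z.
Proof.
have [_ _ count_new sub_new] := scan_inv_state.
rewrite /QuickLexSortRefine -/scan_state numNewID_prefix_sum ?absz_L_lt //.
rewrite -[in subID _ _](qrow_sorted_pos r) sub_new // qclass_sorted_pos.
by congr (_ + _ + _); apply: eq_bigr => k _; rewrite count_new.
Qed.

Lemma class_offsetS l : class_offset l.+1 = class_offset l + (new_ids l m)%:Z.
Proof. exact: big_nat_recr. Qed.

Lemma class_offset_ge0 l : 0 <= class_offset l.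
Proof. exact: sumr_ge0. Qed.

Lemma class_offset_mono l l' : (l <= l')%N -> class_offset l <= class_offset l'.
Proof. by move=> le_ll'; rewrite /class_offset (big_cat_nat _ le_ll') //= lerDl sumr_ge0. Qed.

Lemma sub_rank_le r : (sub_rank r <= new_ids (absz (L r)) m)%N.
Proof. exact: new_ids_mono. Qed.

Lemma sub_rank_eq r r' : L r = L r' -> D r i = D r' i -> sub_rank r = sub_rank r'.
Proof.
wlog le_rr' : r r' / (sorted_pos r <= sorted_pos r')%N.
  by move=> wlog_le eL eD; case: (leqP (sorted_pos r) (sorted_pos r')) => [|/ltnW] le;
    [apply: wlog_le | apply/esym/wlog_le].
move=> eL eD; rewrite /sub_rank -eL -qclass_sorted_pos.
by rewrite (new_ids_eq le_rr') ?qclass_sorted_pos ?qvalue_sorted_pos ?eL.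
Qed.

Lemma sub_rank_lt r r' : L r = L r' -> D r i < D r' i -> (sub_rank r < sub_rank r')%N.
Proof.
move=> eL ltD; rewrite /sub_rank -eL -qclass_sorted_pos.
by apply: new_ids_lt; rewrite ?qclass_sorted_pos ?qvalue_sorted_pos ?eL.
Qed.

Lemma sub_rank_pred r : (0 < sub_rank r)%N ->
  exists2 r', L r' = L r & sub_rank r' = (sub_rank r).-1.
Proof.
move=> /new_ids_pred[k [lt_k cl_k e]].
have [r' pos_r' Lr'] := sorted_pos_class (leq_trans lt_k (ltn_ord _)) cl_k.
by exists r'; rewrite // /sub_rank Lr' pos_r'.
Qed.

Lemma sub_rank_max r : exists2 r', L r' = L r & sub_rank r' = new_ids (absz (L r)) m.
Proof.
have [|k [lt_km cl_k e]] := @new_ids_last (absz (L r)) m.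
  by apply/hasP; exists (val (sorted_pos r)); rewrite ?mem_iota ?add0n ?ltn_ord ?qclass_sorted_pos.
have [r' pos_r' Lr'] := sorted_pos_class lt_km cl_k.
by exists r'; rewrite // /sub_rank Lr' pos_r'.
Qed.

Local Notation L' := (QuickLexSortRefine D Q i L).

Lemma refine_ge0 r : 0 <= L' r.
Proof. by rewrite QuickLexSortRefineE !addr_ge0 ?L_ge0 ?class_offset_ge0. Qed.

Lemma refine_eq r r' : L r = L r' -> D r i = D r' i -> L' r = L' r'.
Proof. by move=> eL eD; rewrite !QuickLexSortRefineE eL (sub_rank_eq eL eD). Qed.

Lemma refine_lt_value r r' : L r = L r' -> D r i < D r' i -> L' r < L' r'.
Proof. by move=> eL ltD; rewrite !QuickLexSortRefineE eL ltrD2l ltz_nat sub_rank_lt. Qed.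

Lemma refine_lt_class r r' : L r < L r' -> L' r < L' r'.
Proof.
move=> ltL; rewrite !QuickLexSortRefineE.
have lt_abs : (absz (L r) < absz (L r'))%N by rewrite -ltz_nat !gez0_abs ?L_ge0.
have := class_offset_mono lt_abs; rewrite class_offsetS.
have : (sub_rank r)%:Z <= (new_ids (absz (L r)) m)%:Z by rewrite lez_nat sub_rank_le.
lia.
Qed.

Lemma refine_dense : dense L -> dense L'.
Proof.
move=> dL r; rewrite QuickLexSortRefineE => L'r_gt0.
have [sub0 | sub_gt0] := posnP (sub_rank r); last first.
  have [r' Lr' sub_r'] := sub_rank_pred sub_gt0.
  by exists r'; rewrite QuickLexSortRefineE Lr' sub_r'; lia.
have [|r1 Lr1] := dL r.
  rewrite lt_def L_ge0 andbT; apply: contraTneq L'r_gt0 => Lr0.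
  by rewrite sub0 Lr0 /class_offset big_geq.
have [r' Lr' sub_r'] := sub_rank_max r1.
have absLr : absz (L r) = (absz (L r1)).+1.
  by apply/eqP; rewrite -eqz_nat -addn1 PoszD !gez0_abs ?L_ge0 // Lr1 subrK.
by exists r'; rewrite QuickLexSortRefineE Lr' sub_r' absLr class_offsetS sub0 Lr1; lia.
Qed.

End Scan.

Theorem mainTheorem2 (R : realType) (m n : nat) (D : 'M[R]_(m, n)) (Q : 'M[int]_(m, n))
    (a : seq 'I_n) (L : 'I_m -> int) (i : 'I_n) :
  sorting_matrix D Q ->
  is_ranking_vector D a L ->
  is_ranking_vector D (rcons a i) (QuickLexSortRefine D Q i L).
Proof.
move=> sortQ rankL; have [[L_range L_eq L_lt] _] := rankL.
apply: dense_ranking_vector.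
- exact: refine_ge0.
- exact: refine_dense (ranking_vector_dense rankL).
- move=> r r'; rewrite !subrow_rcons => /rcons_inj[/L_eq eL eD].
  exact: refine_eq.
- move=> r r'; rewrite !subrow_rcons lexlt_rcons ?size_subrow //.
  case/orP=> [/L_lt | /andP[/eqP/L_eq eL ltD]]; first exact: refine_lt_class.
  exact: refine_lt_value.
Qed.
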